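(* Let $n,r\geq 1$ be integers and let $h\colon \mathbb{Z}\to\mathbb{Z}$ be the Hilbert function of $S/I$, where $I\subseteq S$ is a saturated homogeneous ideal defining a zero-dimensional closed subscheme of $\mathbb{P}^n$ of length $r$. Define $e=\min\{a\in\mathbb{Z}\mid h(a)=r\}$ and let $[I_0]\in\operatorname{Hilb}^h_{S}$ be a closed point. If $[I_0]\in\operatorname{Slip}_{h,n}$, then $H_{S/I_0^k}(d)\geq r\cdot\dim_\Bbbk S_{k-1}$ for every positive integer $k$ and every integer $d\geq ke+k$.
   Context: $\Bbbk$ is an algebraically closed field (arbitrary characteristic), $S=\Bbbk[\alpha_0,\ldots,\alpha_n]$ with the standard $\mathbb{Z}$-grading, $\mathfrak{m}=(\alpha_0,\ldots,\alpha_n)$. For a graded module $M$, $H_M(d)=\dim_\Bbbk M_d$. For a function $h\colon\mathbb{Z}\to\mathbb{Z}$, $\operatorname{Hilb}^h_S$ denotes the multigraded Hilbert scheme (in the sense of Haiman–Sturmfels) parametrizing homogeneous ideals $I\subseteq S$ with $H_{S/I}=h$; its closed points are such ideals, written $[I]$. $\operatorname{Sip}_{h,n}$ is the set of closed points $[I]$ of $\operatorname{Hilb}^h_S$ such that $I$ is the saturated (radical) homogeneous ideal of a set of $r$ distinct points of $\mathbb{P}^n$, and $\operatorname{Slip}_{h,n}$ is its closure in $\operatorname{Hilb}^h_S$. *)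

From HB Require Import structures.
From mathcomp Require Import all_boot all_order all_algebra.
From mathcomp Require Import mpoly.
Set Implicit Arguments. Unset Strict Implicit. Unset Printing Implicit Defensive.
Import Order.TTheory GRing.Theory Num.Theory.
Local Open Scope ring_scope.

Section Defs.
Variables (K : fieldType) (nv : nat).
(* nv = n+1 is the number of variables alpha_0..alpha_n *)
Local Notation P := {mpoly K[nv]}.

Definition mons (d : nat) : seq 'X_{1..nv} :=
  [seq bmnm m | m <- enum {: 'X_{1..nv < d.+1}} & mdeg (bmnm m) == d].

Definition dimS (d : nat) : nat := size (mons d).

Definition is_ideal (I : P -> Prop) : Prop :=
  [/\ I 0, (forall p q, I p -> I q -> I (p + q)) & (forall a p, I p -> I (a * p))].

Definition is_homog_ideal (I : P -> Prop) : Prop :=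
  is_ideal I /\ forall p d, I p -> I (pihomog mdeg d p).

Definition ideal_mul (J I : P -> Prop) : P -> Prop :=
  fun p => exists s : seq (P * P),
    (forall x, x \in s -> J x.1 /\ I x.2) /\ p = \sum_(x <- s) x.1 * x.2.

Fixpoint ideal_pow (I : P -> Prop) (k : nat) : P -> Prop :=
  match k with
  | 0%N => fun _ => True
  | k'.+1 => ideal_mul (ideal_pow I k') I
  end.

Definition basis_deg (I : P -> Prop) (d : nat) (B : seq P) : Prop :=
  [/\ (forall p, p \in B -> I p /\ p \is d.-homog),
      (forall c : 'I_(size B) -> K,
          \sum_(i < size B) c i *: B`_i = 0 -> forall i, c i = 0)
    & (forall p, I p -> p \is d.-homog ->
          exists c : 'I_(size B) -> K, p = \sum_(i < size B) c i *: B`_i)].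

Definition hilbfun (I : P -> Prop) (h : int -> int) : Prop :=
  forall d : int, match d with
  | Posz d' => exists B, basis_deg I d' B /\ h d = (dimS d')%:Z - (size B)%:Z
  | Negz _ => h d = 0
  end.

Definition in_Hilb (h : int -> int) (I : P -> Prop) : Prop :=
  is_homog_ideal I /\ hilbfun I h.

(* saturation with respect to m = (alpha_0, ..., alpha_n) *)
Definition saturated (I : P -> Prop) : Prop :=
  forall p N, (forall m, m \in mons N -> I ('X_[m] * p)) -> I p.

(* homogeneous ideal of a finite set of points of P^n, given by
   representatives pts i in K^(n+1) \ {0} *)
Definition ideal_of_points r (pts : 'I_r -> 'I_nv -> K) : P -> Prop :=
  fun p => forall (i : 'I_r) (d : nat), (pihomog mdeg d p).@[pts i] = 0.

Definition distinct_proj_points r (pts : 'I_r -> 'I_nv -> K) : Prop :=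
  (forall i, exists j, pts i j != 0) /\
  (forall i i', i != i' -> ~ exists c : K, forall j, pts i j = c * pts i' j).

Definition Sip (h : int -> int) (r : nat) (J : P -> Prop) : Prop :=
  in_Hilb h J /\
  exists pts : 'I_r -> 'I_nv -> K,
    distinct_proj_points pts /\ J = ideal_of_points pts.

(* Zariski topology on the closed points of Hilb^h_S.
   For a finite list of degrees D, a tuple of bases Bs of (I_d)_{d in D} gives
   a tuple of matrices (coefficients w.r.t. monomials); the coordinates below
   list all the entries of these matrices. *)
Definition bases_degs (I : P -> Prop) (D : seq nat) (Bs : seq (seq P)) : Prop :=
  size Bs = size D /\
  forall j, (j < size D)%N -> basis_deg I (nth 0%N D j) (nth [::] Bs j).

Definition coords (D : seq nat) (Bs : seq (seq P)) : seq K :=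
  flatten [seq flatten [seq [seq p@_m | m <- mons x.1] | p <- x.2]
          | x <- zip D Bs].

Definition coordv (N : nat) (D : seq nat) (Bs : seq (seq P)) : 'I_N -> K :=
  fun i => nth 0 (coords D Bs) i.

Definition basic_closed (D : seq nat) (N : nat) (F : {mpoly K[N]})
    (I : P -> Prop) : Prop :=
  forall Bs, bases_degs I D Bs -> F.@[@coordv N D Bs] = 0.

(* Slip_{h,n} = closure of Sip_{h,n} in Hilb^h_S *)
Definition Slip (h : int -> int) (r : nat) (I0 : P -> Prop) : Prop :=
  in_Hilb h I0 /\
  forall (D : seq nat) (N : nat) (F : {mpoly K[N]}),
    (forall J, Sip h r J -> basic_closed D F J) -> basic_closed D F I0.

End Defs.

From Pilot Require Import Defs.
From HB Require Import structures.
From mathcomp Require Import all_boot all_order all_algebra.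
From mathcomp Require Import mpoly.
Set Implicit Arguments. Unset Strict Implicit. Unset Printing Implicit Defensive.
Import Order.TTheory GRing.Theory Num.Theory.
Local Open Scope ring_scope.

(* 1. Points of Sip.  Let J be the ideal of r distinct points p_1..p_r with
      h(e) = r.  Then evaluation S_e -> K^r is onto, which gives forms f_i of
      degree e with f_i(p_j) = delta_ij.  Choosing linear forms L_i with
      L_i(p_i) != 0 and s = d - k e - (k - 1), the r * dim S_{k-1} forms
      f_i^k L_i^s m (m a monomial of degree k - 1) are linearly independent
      modulo the forms vanishing to order k at every p_j, in particular modulo
      (J^k)_d.  This yields the inequality for J^k.
   2. Semicontinuity.  Fix bases of I_a for a <= d.  The products of basis
      elements span (I^k)_d; their coefficients are polynomials in the
      coordinates of the bases.  If the rank of this family for I0 exceeded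
      dim S_d - r dim S_{k-1}, a nonzero maximal minor would give a polynomial
      in the coordinates vanishing on Sip but not at I0, contradicting
      [I0] in Slip.  A basis of (I0^k)_d extracted from the family concludes. *)

(* A finite family
   G of forms is recorded by its coefficient matrix [coefmx d G], so that
   spans and dimensions become row spaces and ranks. *)
Section Coordinates.
Variables (K : fieldType) (nv : nat).
Local Notation P := {mpoly K[nv]}.
Local Notation dimS := (dimS nv).
Local Notation mons := (mons nv).

Lemma mons_uniq d : uniq (mons d).
Proof.
rewrite /mons map_inj_in_uniq; first by apply: filter_uniq; apply: enum_uniq.
by move=> x y _ _; apply: val_inj.
Qed.

Lemma mem_mons d m : (m \in mons d) = (mdeg m == d).
Proof.
apply/idP/idP => [/mapP[b]|/eqP md].
  by rewrite mem_filter => /andP[bd _] ->.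
have mlt : (mdeg m < d.+1)%N by rewrite md.
by apply/mapP; exists (BMultinom mlt); rewrite // mem_filter /= md eqxx mem_enum.
Qed.

Definition mon d (j : 'I_(dimS d)) : 'X_{1..nv} := nth 0%MM (mons d) j.

Lemma mon_deg d j : mdeg (@mon d j) = d.
Proof. by apply/eqP; rewrite -mem_mons mem_nth. Qed.

Lemma mon_inj d : injective (@mon d).
Proof. by move=> i j /eqP; rewrite nth_uniq ?mons_uniq // => /eqP/val_inj. Qed.

Lemma mon_surj d m : mdeg m = d -> exists j, m = @mon d j.
Proof.
move=> md; have m_in : m \in mons d by rewrite mem_mons md.
have lt_idx : (index m (mons d) < dimS d)%N by rewrite /dimS index_mem.
by exists (Ordinal lt_idx); rewrite /mon /= nth_index.
Qed.

Lemma dhomog_mon d j : ('X_[@mon d j] : P) \is d.-homog.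
Proof. by rewrite dhomogX; apply/eqP; apply: mon_deg. Qed.

Definition coefv d (p : P) : 'rV[K]_(dimS d) := \row_j p@_(mon j).
Definition polv d (v : 'rV[K]_(dimS d)) : P := \sum_j v 0 j *: 'X_[mon j].
Arguments polv : clear implicits.

Lemma coefv_is_linear d : linear (coefv d).
Proof. by move=> c p q; apply/rowP=> j; rewrite !mxE mcoeffD mcoeffZ. Qed.
HB.instance Definition _ d :=
  GRing.isLinear.Build K P 'rV[K]_(dimS d) *:%R (coefv d) (coefv_is_linear d).

Lemma dhomog_sum d (I : Type) (s : seq I) (F : I -> P) :
  (forall i, F i \is d.-homog) -> \sum_(i <- s) F i \is d.-homog.
Proof.
move=> Fd; apply: (big_ind (fun p => p \is d.-homog)) => //; first exact: dhomog0.
by move=> p q; apply: dhomogD.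
Qed.

Lemma dhomog_comb d (G : seq P) (c : 'I_(size G) -> K) :
  (forall g, g \in G -> g \is d.-homog) ->
  \sum_(i < size G) c i *: G`_i \is d.-homog.
Proof. by move=> Gd; apply: dhomog_sum => i; apply/dhomogZ/Gd/mem_nth. Qed.

Lemma polv_homog d v : polv d v \is d.-homog.
Proof. by apply: dhomog_sum => j; apply/dhomogZ/dhomog_mon. Qed.

Lemma mcoeff_polv d v j : (polv d v)@_(mon j) = v 0 j.
Proof.
rewrite /polv raddf_sum (bigD1 j) //= mcoeffZ mcoeffX eqxx mulr1 big1 ?addr0 //.
by move=> i ij; rewrite mcoeffZ mcoeffX inj_eq ?(negbTE ij) ?mulr0 //; apply: mon_inj.
Qed.

Lemma polvK d : cancel (polv d) (coefv d).
Proof. by move=> v; apply/rowP=> j; rewrite mxE mcoeff_polv. Qed.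

Lemma coefvK d p : p \is d.-homog -> polv d (coefv d p) = p.
Proof.
move=> pd; apply/mpolyP=> m; have [md|md] := eqVneq (mdeg m) d.
  by have [j ->] := mon_surj md; rewrite mcoeff_polv mxE.
by rewrite !(dhomog_nemf_coeff _ md) ?polv_homog.
Qed.

Lemma polv0 d : polv d 0 = 0.
Proof. by rewrite /polv big1 // => j _; rewrite mxE scale0r. Qed.

Lemma coefv_inj d p q :
  p \is d.-homog -> q \is d.-homog -> coefv d p = coefv d q -> p = q.
Proof. by move=> pd qd pq; rewrite -(coefvK pd) -(coefvK qd) pq. Qed.

Definition in_span (G : seq P) (p : P) :=
  exists c : 'I_(size G) -> K, p = \sum_(i < size G) c i *: G`_i.

Lemma in_span0 G : in_span G 0.
Proof. by exists (fun _ => 0); rewrite big1 // => i _; rewrite scale0r. Qed.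

Lemma in_spanD G p q : in_span G p -> in_span G q -> in_span G (p + q).
Proof.
move=> [c ->] [c' ->]; exists (fun i => c i + c' i).
by rewrite -big_split; apply: eq_bigr => i _; rewrite scalerDl.
Qed.

Lemma in_spanZ G a p : in_span G p -> in_span G (a *: p).
Proof.
move=> [c ->]; exists (fun i => a * c i).
by rewrite scaler_sumr; apply: eq_bigr => i _; rewrite scalerA.
Qed.

Lemma in_span_mem G g : g \in G -> in_span G g.
Proof.
move=> gG; have lt_idx : (index g G < size G)%N by rewrite index_mem.
pose j := Ordinal lt_idx.
exists (fun i => (i == j)%:R); rewrite (bigD1 j) //= eqxx scale1r big1 ?addr0.
  by rewrite nth_index.
by move=> i /negbTE ->; rewrite scale0r.
Qed.

Lemma in_span_sum G (I : Type) (s : seq I) (C : pred I) (F : I -> P) :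
  (forall i, C i -> in_span G (F i)) -> in_span G (\sum_(i <- s | C i) F i).
Proof. by move=> FG; apply: (big_ind (in_span G)) => //; [apply: in_span0|apply: in_spanD]. Qed.

Lemma in_span_trans G H p :
  (forall g, g \in G -> in_span H g) -> in_span G p -> in_span H p.
Proof.
by move=> GH [c ->]; apply: in_span_sum => i _; apply/in_spanZ/GH/mem_nth.
Qed.

Lemma in_spanM G H x y : in_span G x -> in_span H y ->
  in_span [seq g * h | g <- G, h <- H] (x * y).
Proof.
move=> [c ->] [c' ->]; rewrite mulr_suml; apply: in_span_sum => i _.
rewrite mulr_sumr; apply: in_span_sum => j _.
rewrite -scalerAl -scalerAr; apply/in_spanZ/in_spanZ/in_span_mem.
by apply/allpairsP; exists (G`_i, H`_j); rewrite !mem_nth.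
Qed.

Definition coefmx d (G : seq P) : 'M[K]_(size G, dimS d) :=
  \matrix_(i, j) (G`_i)@_(mon j).

Lemma row_coefmx d G i : row i (coefmx d G) = coefv d G`_i.
Proof. by apply/rowP=> j; rewrite !mxE. Qed.

Lemma mul_coefmx d G (u : 'rV_(size G)) :
  u *m coefmx d G = coefv d (\sum_i u 0 i *: G`_i).
Proof.
rewrite mulmx_sum_row linear_sum; apply: eq_bigr => i _.
by rewrite row_coefmx linearZ.
Qed.

Lemma in_spanE d G p : (forall g, g \in G -> g \is d.-homog) ->
  p \is d.-homog -> in_span G p <-> (coefv d p <= coefmx d G)%MS.
Proof.
move=> Gd pd; split=> [[c ->]|/submxP[u pu]].
  apply/submxP; exists (\row_i c i); rewrite mul_coefmx.
  by congr coefv; apply: eq_bigr => i _; rewrite mxE.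
exists (fun i => u 0 i); apply: (coefv_inj pd); first exact: dhomog_comb.
by rewrite pu mul_coefmx.
Qed.

Lemma coefmx_freeP d (B : seq P) : (forall g, g \in B -> g \is d.-homog) ->
  reflect (forall c : 'I_(size B) -> K,
             \sum_(i < size B) c i *: B`_i = 0 -> forall i, c i = 0)
          (row_free (coefmx d B)).
Proof.
move=> Bd; apply: (iffP idP) => [free c c0 i|indep].
  have : \row_j c j *m coefmx d B = 0 *m coefmx d B.
    rewrite mul0mx mul_coefmx (eq_bigr (fun j => c j *: B`_j)) ?c0 ?linear0 //.
    by move=> j _; rewrite mxE.
  by move/(row_free_inj free)/rowP/(_ i); rewrite !mxE.
apply/inj_row_free => v; rewrite mul_coefmx => v0; apply/rowP => i.
rewrite mxE; apply: indep i; apply: (coefv_inj (dhomog_comb _ Bd)).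
  exact: dhomog0.
by rewrite v0 linear0.
Qed.

Lemma basis_homog (I : P -> Prop) d B :
  basis_deg I d B -> forall g, g \in B -> g \is d.-homog.
Proof. by case=> BI _ _ g /BI[]. Qed.

Lemma basis_free (I : P -> Prop) d B : basis_deg I d B -> row_free (coefmx d B).
Proof. by move=> Bb; have [_ indep _] := Bb; apply/(coefmx_freeP (basis_homog Bb)). Qed.

Lemma basis_sub (I : P -> Prop) d B B' :
  basis_deg I d B -> basis_deg I d B' -> (coefmx d B <= coefmx d B')%MS.
Proof.
move=> [BI _ _] Bb'; have [_ _ span'] := Bb'; apply/row_subP => i.
have [Ig gd] := BI _ (mem_nth 0 (ltn_ord i)).
by rewrite row_coefmx; apply/(in_spanE (basis_homog Bb') gd)/span'.
Qed.

Lemma basis_size (I : P -> Prop) d B B' :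
  basis_deg I d B -> basis_deg I d B' -> size B = size B'.
Proof.
move=> Bb Bb'; have := mxrankS (basis_sub Bb Bb').
have := mxrankS (basis_sub Bb' Bb).
rewrite (eqP (basis_free Bb)) (eqP (basis_free Bb')) => le1 le2.
by apply/eqP; rewrite eqn_leq le1 le2.
Qed.

(* A spanning family G of I_d (inside I) contains a basis of I_d of size
   \rank (coefmx d G): take the forms of a row basis of its matrix. *)
Lemma basis_of_spanning (I : P -> Prop) d (G : seq P) :
  is_ideal I -> (forall g, g \in G -> I g /\ g \is d.-homog) ->
  (forall p, I p -> p \is d.-homog -> in_span G p) ->
  exists B, basis_deg I d B /\ size B = \rank (coefmx d G).
Proof.
move=> [I0 ID IM] GI Gspan.
have Gd (g : P) : g \in G -> g \is d.-homog by case/GI.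
have I_comb c : I (\sum_(i < size G) c i *: G`_i).
  apply: (big_ind I) => // i _; rewrite -mul_mpolyC; apply: IM.
  by case: (GI _ (mem_nth 0 (ltn_ord i))).
set RB := row_base (coefmx d G).
pose B := [seq polv d (row i RB) | i <- enum 'I_(\rank (coefmx d G))].
have sizeB : size B = \rank (coefmx d G) by rewrite size_map size_enum_ord.
have Bd g : g \in B -> g \is d.-homog by case/mapP=> i _ ->; apply: polv_homog.
have row_B (i : 'I_(\rank (coefmx d G))) : coefv d B`_i = row i RB.
  by rewrite (nth_map i) ?size_enum_ord // nth_ord_enum polvK.
have eqB : (coefmx d B == RB)%MS.
  apply/andP; split; apply/row_subP => i.
    by rewrite row_coefmx; case/mapP: (mem_nth 0 (ltn_ord i)) => j _ ->; rewrite polvK row_sub.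
  have iB : (i < size B)%N by rewrite sizeB.
  rewrite -row_B; apply/(in_spanE Bd (Bd _ (mem_nth 0 iB))).
  exact/in_span_mem/mem_nth.
exists B; split=> //; split.
- move=> g gB; split; last exact: Bd.
  case/mapP: gB => i _ ->; have /submxP[u ->] : (row i RB <= coefmx d G)%MS.
    by rewrite (submx_trans (row_sub i _)) ?eq_row_base.
  by rewrite mul_coefmx coefvK ?dhomog_comb.
- apply/(coefmx_freeP Bd).
  by rewrite /row_free (eqmx_rank eqB) sizeB; apply: row_base_free.
- move=> p Ip pd; apply/(in_spanE Bd pd).
  rewrite (submx_trans (proj1 (in_spanE Gd pd) (Gspan p Ip pd))) //.
  by rewrite -(eq_row_base (coefmx d G)); case/andP: eqB.
Qed.

End Coordinates.
Arguments polv {K nv} d v.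

(* Given families [bs a]
   (meant to be bases of I_a), [pow_gens bs k a] lists the products
   m * b_1 * ... * b_k with m a monomial and b_i in [bs a_i], of total degree
   a.  It is defined over any commutative ring so that it can later be
   computed with indeterminate coefficients. *)
Section PowGens.
Variables (R : comNzRingType) (nv : nat) (bs : nat -> seq {mpoly R[nv]}).

Fixpoint pow_gens (k a : nat) : seq {mpoly R[nv]} :=
  match k with
  | 0%N => [seq 'X_[m] | m <- mons nv a]
  | k'.+1 => flatten [seq [seq x * b | x <- pow_gens k' (a - a'), b <- bs a']
                     | a' <- iota 0 a.+1]
  end.

Lemma pow_gensS k a : pow_gens k.+1 a =
  flatten [seq [seq x * b | x <- pow_gens k (a - a'), b <- bs a'] | a' <- iota 0 a.+1].
Proof. by []. Qed.

End PowGens.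

Lemma eq_pow_gens (R : comNzRingType) nv (bs1 bs2 : nat -> seq {mpoly R[nv]}) k a :
  bs1 =1 bs2 -> pow_gens bs1 k a = pow_gens bs2 k a.
Proof.
move=> eq_bs; elim: k a => [|k IH] a //; rewrite !pow_gensS.
by congr flatten; apply: eq_map => a' /=; rewrite IH eq_bs.
Qed.

Lemma map_pow_gens (R S : comNzRingType) nv (f : {rmorphism R -> S})
    (bs : nat -> seq {mpoly R[nv]}) k a :
  map (map_mpoly f) (pow_gens bs k a) =
  pow_gens (fun a => map (map_mpoly f) (bs a)) k a.
Proof.
elim: k a => [|k IH] a.
  by rewrite /= -map_comp; apply: eq_map => m /=; rewrite map_mpolyX.
rewrite !pow_gensS map_flatten -map_comp; congr flatten; apply: eq_map => a' /=.
rewrite map_allpairs -IH allpairs_mapl allpairs_mapr.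
by apply: eq_allpairs => x y; rewrite rmorphM.
Qed.

Section PowGensIdeal.
Variables (K : fieldType) (nv : nat).
Local Notation P := {mpoly K[nv]}.

Lemma ideal_pow_ideal (I : P -> Prop) k : is_ideal (ideal_pow I k).
Proof.
elim: k => [|k [_ _ IkM]] //=; split.
- by exists [::]; rewrite big_nil.
- move=> p q [s [sI ->]] [t [tI ->]]; exists (s ++ t); rewrite big_cat.
  by split=> // x; rewrite mem_cat => /orP[/sI|/tI].
- move=> a p [s [sI ->]]; exists [seq (a * x.1, x.2) | x <- s]; split.
    by move=> x /mapP[y /sI[y1 y2] ->]; split=> //; apply: IkM.
  by rewrite big_map mulr_sumr; apply: eq_bigr => x _; rewrite mulrA.
Qed.

Variables (I : P -> Prop) (bs : nat -> seq P) (D : nat).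
Hypothesis homI : is_homog_ideal I.
Hypothesis bs_basis : forall a, (a <= D)%N -> basis_deg I a (bs a).

Lemma mem_pow_gensS k a g : g \in pow_gens bs k.+1 a ->
  exists a' x b, [/\ (a' <= a)%N, x \in pow_gens bs k (a - a'), b \in bs a' & g = x * b].
Proof.
move=> /flattenP[s /mapP[a' a'a ->]] /allpairsP[[x b] [xg bb ->]].
by exists a', x, b; split=> //; move: a'a; rewrite mem_iota ltnS.
Qed.

Lemma pow_gens_homog_in k t g : (t <= D)%N -> g \in pow_gens bs k t ->
  ideal_pow I k g /\ g \is t.-homog.
Proof.
elim: k t g => [|k IH] t g tD.
  by case/mapP=> m; rewrite mem_mons => md ->; rewrite dhomogX.
case/mem_pow_gensS=> a' [x [b [a't xg bb ->]]].
have [xI xd] := IH _ _ (leq_trans (leq_subr _ _) tD) xg.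
have [bI bd] : I b /\ b \is a'.-homog.
  by have [Bb _ _] := bs_basis (leq_trans a't tD); apply: Bb.
split; last by rewrite -(subnK a't); apply: dhomogM.
by exists [:: (x, b)]; rewrite big_seq1; split=> // z; rewrite inE => /eqP ->.
Qed.

Lemma pow_gens_span_mul k i j x y : (i + j <= D)%N ->
  in_span (pow_gens bs k i) x -> I y -> y \is j.-homog ->
  in_span (pow_gens bs k.+1 (i + j)) (x * y).
Proof.
move=> ijD xspan Iy yd; have [_ _ bspan] := bs_basis (leq_trans (leq_addl i j) ijD).
apply: (@in_span_trans _ _ [seq g * b | g <- pow_gens bs k i, b <- bs j]).
  move=> g gG; apply: in_span_mem; rewrite pow_gensS; apply/flattenP.
  exists [seq x0 * b | x0 <- pow_gens bs k (i + j - j), b <- bs j]; last first.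
    by rewrite addnK.
  by apply/mapP; exists j; rewrite // mem_iota ltnS leq_addl.
by apply: in_spanM => //; apply: bspan.
Qed.

Lemma pow_gens_span k p a : (a <= D)%N -> ideal_pow I k p ->
  in_span (pow_gens bs k a) (pihomog mdeg a p).
Proof.
elim: k p a => [|k IH] p a aD.
  move=> _; rewrite -(coefvK (pihomogP mdeg a p)) /polv.
  by apply: in_span_sum => j _; apply/in_spanZ/in_span_mem/map_f/mem_nth.
case=> s [sI ->]; rewrite raddf_sum big_seq.
apply: in_span_sum => -[x y] /sI[Ix Iy] /=.
pose N := maxn (msize x) (msize y).
rewrite (pihomog_partitionE (mf := mdeg) (k := N) (p := x)) ?leq_maxl //.
rewrite (pihomog_partitionE (mf := mdeg) (k := N) (p := y)) ?leq_maxr //.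
rewrite mulr_suml raddf_sum; apply: in_span_sum => i _.
rewrite mulr_sumr raddf_sum; apply: in_span_sum => j _ /=.
have ij_homog : pihomog mdeg i x * pihomog mdeg j y \is (i + j)%N.-homog.
  by apply: dhomogM; apply: pihomogP.
have [ija|ija] := eqVneq (i + j)%N a; last first.
  by rewrite (pihomog_ne0 ija ij_homog); apply: in_span0.
subst a; rewrite pihomog_dE //; apply: pow_gens_span_mul => //.
- by apply: IH => //; apply: leq_trans aD; apply: leq_addr.
- exact: homI.2.
- exact: pihomogP.
Qed.

End PowGensIdeal.

(* A form p vanishes to order k at q when [shift q p], the
   polynomial x |-> p (x + q), lies in m^k. *)
Section VanishingOrder.
Variables (K : fieldType) (nv : nat).
Local Notation P := {mpoly K[nv]}.

Definition low_ord k (p : P) := forall m, m \in msupp p -> (k <= mdeg m)%N.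
Definition deg_le k (p : P) := forall m, m \in msupp p -> (mdeg m <= k)%N.

Lemma low_ord0 k : low_ord k 0.
Proof. by move=> m; rewrite msupp0. Qed.

Lemma low_ordD k p q : low_ord k p -> low_ord k q -> low_ord k (p + q).
Proof. by move=> pk qk m /msuppD_le; rewrite mem_cat => /orP[/pk|/qk]. Qed.

Lemma low_ordN k p : low_ord k p -> low_ord k (- p).
Proof. by move=> pk m; rewrite (perm_mem (msuppN p)); apply: pk. Qed.

Lemma low_ordZ k c p : low_ord k p -> low_ord k (c *: p).
Proof. by move=> pk m /msuppZ_le; apply: pk. Qed.

Lemma low_ordM a b p q : low_ord a p -> low_ord b q -> low_ord (a + b) (p * q).
Proof.
move=> pa qb m /msuppM_le/allpairsP[[m1 m2] [m1p m2q ->]] /=.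
by rewrite mdegD leq_add ?pa ?qb.
Qed.

Lemma low_ordX a n p : low_ord a p -> low_ord (a * n) (p ^+ n).
Proof.
move=> pa; elim: n => [|n IH]; first by rewrite muln0.
by rewrite exprS mulnS; apply: low_ordM.
Qed.

Lemma low_ord_sum k (I : Type) (s : seq I) (C : pred I) (F : I -> P) :
  (forall i, C i -> low_ord k (F i)) -> low_ord k (\sum_(i <- s | C i) F i).
Proof. by move=> Fk; apply: big_ind => //; [apply: low_ord0|apply: low_ordD]. Qed.

Lemma low_ord1 p : p@_0%MM = 0 -> low_ord 1 p.
Proof.
move=> p0 m mp; rewrite lt0n mdeg_eq0; apply: contraTneq mp => ->.
by rewrite mcoeff_msupp p0 eqxx.
Qed.

Lemma deg_leC c : deg_le 0 (c%:MP : P).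
Proof.
by move=> m; rewrite msuppC; case: eqP => //= _; rewrite inE => /eqP ->; rewrite mdeg0.
Qed.

Lemma deg_leD k p q : deg_le k p -> deg_le k q -> deg_le k (p + q).
Proof. by move=> pk qk m /msuppD_le; rewrite mem_cat => /orP[/pk|/qk]. Qed.

Lemma deg_leM a b p q : deg_le a p -> deg_le b q -> deg_le (a + b) (p * q).
Proof.
move=> pa qb m /msuppM_le/allpairsP[[m1 m2] [m1p m2q ->]] /=.
by rewrite mdegD leq_add ?pa ?qb.
Qed.

Lemma deg_leX a n p : deg_le a p -> deg_le (a * n) (p ^+ n).
Proof.
move=> pa; elim: n => [|n IH]; first by rewrite muln0 expr0 -mpolyC1; apply: deg_leC.
by rewrite exprS mulnS; apply: deg_leM.
Qed.

Lemma deg_le_sum k (I : Type) (s : seq I) (F : I -> P) :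
  (forall i, deg_le k (F i)) -> deg_le k (\sum_(i <- s) F i).
Proof.
move=> Fk; apply: big_ind => // [m|]; last exact: deg_leD.
by rewrite msupp0.
Qed.

Lemma low_ord_deg_le0 k p : low_ord k.+1 p -> deg_le k p -> p = 0.
Proof.
move=> lo up; apply/eqP; rewrite -msupp_eq0; case E: (msupp p) => [|m s] //.
have mp : m \in msupp p by rewrite E inE eqxx.
by have := leq_trans (lo m mp) (up m mp); rewrite ltnn.
Qed.

(* Multiplying by a unit of the local ring at 0 does not lower the order:
   U = c (1 - w) with w in m is inverted modulo m^k by c^-1 (1 + ... + w^(k-1)). *)
Lemma low_ord_cancel k (U Y : P) : low_ord k (U * Y) -> U@_0%MM != 0 -> low_ord k Y.
Proof.
move=> UYk; set c := U@_0%MM => c0.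
pose w := c^-1 *: (c%:MP - U).
have w1 : low_ord 1 w.
  by apply/low_ordZ/low_ord1; rewrite mcoeffB mcoeffC eqxx mulr1 subrr.
have Uw : c^-1 *: U = 1 - w.
  have cc : c^-1 *: (c%:MP : P) = 1.
    by rewrite -mul_mpolyC -mpolyCM mulVf // mpolyC1.
  by rewrite /w scalerBr cc opprB addrC subrK.
pose S := \sum_(i < k) w ^+ i.
have geom : (1 - w) * S = 1 - w ^+ k.
  by rewrite -[1 - w]opprB mulNr -subrX1 opprB.
have -> : Y = S * (c^-1 *: (U * Y)) + w ^+ k * Y.
  by rewrite scalerAl Uw mulrA [S * _]mulrC geom mulrBl mul1r subrK.
apply: low_ordD; first by rewrite -[k]add0n; apply: low_ordM => //; apply: low_ordZ.
have Y0 : low_ord 0 Y by move=> m.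
by have := low_ordM (low_ordX (n := k) w1) Y0; rewrite mul1n addn0.
Qed.

Lemma mpoly_morph_eq (S : comNzRingType) (f g : {rmorphism P -> S}) :
  (forall c, f c%:MP = g c%:MP) -> (forall i, f 'X_i = g 'X_i) -> f =1 g.
Proof.
move=> fgC fgX p; rewrite (mpolyE p) !rmorph_sum; apply: eq_bigr => m _.
rewrite -mul_mpolyC !rmorphM fgC mpolyXE_id !rmorph_prod; congr (_ * _).
by apply: eq_bigr => i _; rewrite !rmorphXn fgX.
Qed.

Lemma meval0_coef (p : P) : p.@[fun _ => 0] = p@_0%MM.
Proof.
rewrite {2}(mpolyE p) raddf_sum /= mevalE; apply: eq_bigr => m _.
rewrite mcoeffZ mcoeffX; congr (_ * _); have [->|m0] := eqVneq m 0%MM.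
  by rewrite big1 // => i _; rewrite mnm0E expr0.
have [i mi] : exists i, m i != 0%N.
  apply/existsP; apply: contraR m0; rewrite negb_exists => /forallP m0.
  by apply/eqP/mnmP => i; rewrite mnm0E; apply/eqP/negPn.
by rewrite (bigD1 i) //= expr0n (negbTE mi) mul0r.
Qed.

Definition shift (q : 'I_nv -> K) : {rmorphism P -> P} :=
  mmap (@mpolyC nv K) (fun j : 'I_nv => 'X_j + (q j)%:MP).

Lemma shiftC q c : shift q c%:MP = c%:MP.
Proof. exact: mmapC. Qed.

Lemma shiftX q i : shift q 'X_i = 'X_i + (q i)%:MP.
Proof. by rewrite /shift /= mmapX mmap1U. Qed.

Lemma shiftK q : cancel (shift q) (shift (fun j => - q j)).
Proof.
apply: (@mpoly_morph_eq _ (shift _ \o shift q) idfun) => [c|i] /=.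
  by rewrite !shiftC.
by rewrite shiftX rmorphD /= shiftX shiftC -addrA -mpolyCD addNr mpolyC0 addr0.
Qed.

Lemma shift_coef0 q p : (shift q p)@_0%MM = p.@[q].
Proof.
rewrite -meval0_coef.
apply: (@mpoly_morph_eq _ (meval (fun _ => 0) \o shift q) (meval q)) => [c|i] /=.
  by rewrite shiftC !mevalC.
by rewrite shiftX mevalD mevalC mevalXU add0r mevalXU.
Qed.

Lemma shift_deg_le q d p : p \is d.-homog -> deg_le d (shift q p).
Proof.
move=> pd; rewrite /shift /= /mmap; apply: deg_le_sum => m.
have [mp|mp] := boolP (m \in msupp p); last first.
  by rewrite memN_msupp_eq0 // mul_mpolyC scale0r => m'; rewrite msupp0.
rewrite -[d]add0n; apply: deg_leM; first exact: deg_leC.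
rewrite -(dhomog_mf pd mp) /= mdegE /mmap1.
apply: (big_rec2 (fun a (z : P) => deg_le a z)); first by rewrite -mpolyC1; apply: deg_leC.
move=> i a z _ za; apply: deg_leM => //.
have Xq1 : deg_le 1 ('X_i + (q i)%:MP : P).
  move=> m'; move/msuppD_le; rewrite mem_cat => /orP[|/deg_leC/leq_trans]; last exact.
  by rewrite msuppX inE => /eqP ->; rewrite mdeg1.
by have := deg_leX (n := m i) Xq1; rewrite mul1n.
Qed.

Definition vanish k q (p : P) := low_ord k (shift q p).

Lemma vanishB k q p p' : vanish k q p -> vanish k q p' -> vanish k q (p - p').
Proof. by rewrite /vanish rmorphB => ? /low_ordN; apply: low_ordD. Qed.

Lemma vanishZ k q c p : vanish k q p -> vanish k q (c *: p).
Proof. by rewrite /vanish -mul_mpolyC rmorphM /= shiftC mul_mpolyC; apply: low_ordZ. Qed.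

Lemma vanishM a b q p p' : vanish a q p -> vanish b q p' -> vanish (a + b) q (p * p').
Proof. by rewrite /vanish rmorphM; apply: low_ordM. Qed.

Lemma vanishX a n q p : vanish a q p -> vanish (a * n) q (p ^+ n).
Proof. by rewrite /vanish rmorphXn; apply: low_ordX. Qed.

Lemma vanish_sum k q (I : Type) (s : seq I) (C : pred I) (F : I -> P) :
  (forall i, C i -> vanish k q (F i)) -> vanish k q (\sum_(i <- s | C i) F i).
Proof. by move=> Fk; rewrite /vanish rmorph_sum; apply: low_ord_sum. Qed.

Lemma vanish1 q p : p.@[q] = 0 -> vanish 1 q p.
Proof. by move=> pq; apply: low_ord1; rewrite shift_coef0. Qed.

Lemma vanish_cancel k q (U Y : P) : (0 < k)%N ->
  vanish k q (U * Y) -> U.@[q] != 0 -> Y \is k.-1.-homog -> Y = 0.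
Proof.
move=> k0; rewrite /vanish rmorphM -shift_coef0 => UYk Uq Yd.
have Y0 : shift q Y = 0.
  apply: (low_ord_deg_le0 _ (shift_deg_le (q := q) Yd)).
  by rewrite prednK //; apply: low_ord_cancel Uq.
by rewrite -(shiftK q Y) Y0 rmorph0.
Qed.

End VanishingOrder.

Section VanishingBound.
Variables (K : fieldType) (nv r : nat) (pts : 'I_r -> 'I_nv -> K).
Variables (k E d : nat) (f L : 'I_r -> {mpoly K[nv]}).
Local Notation P := {mpoly K[nv]}.
Hypothesis k_gt0 : (0 < k)%N.
Hypothesis d_large : (k * E + k.-1 <= d)%N.
Hypothesis f_homog : forall i, f i \is E.-homog.
Hypothesis f_delta : forall i j, (f i).@[pts j] = (i == j)%:R.
Hypothesis L_homog : forall i, L i \is 1.-homog.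
Hypothesis L_nz : forall i, (L i).@[pts i] != 0.

Local Notation T := ('I_r * 'I_(dimS nv k.-1))%type.
Let s := (d - (k * E + k.-1))%N.

Definition sep_form (z : T) : P := f z.1 ^+ k * (L z.1 ^+ s * 'X_[mon z.2]).

Lemma sep_form_homog z : sep_form z \is d.-homog.
Proof.
have -> : d = (E * k + (1 * s + k.-1))%N.
  by rewrite mul1n mulnC [(s + _)%N]addnC addnA /s subnKC.
by apply/dhomogM/dhomogM/dhomog_mon; apply: dhomogMn.
Qed.

(* f_i^k vanishes to order k at every p_j with j != i. *)
Lemma sep_form_vanish i0 z : z.1 != i0 -> vanish k (pts i0) (sep_form z).
Proof.
move=> zi0; have f1 : vanish 1 (pts i0) (f z.1).
  by apply: vanish1; rewrite f_delta (negbTE zi0).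
have any0 (p : P) : vanish 0 (pts i0) p by [].
by have := vanishM (any0 (L z.1 ^+ s * 'X_[mon z.2])) (vanishX (n := k) f1);
  rewrite add0n mul1n /sep_form mulrC.
Qed.

(* At p_i0 the other blocks vanish to order k, so
   U * Y does, with U = f_i0^k L_i0^s a unit at p_i0 and Y of degree k - 1. *)
Lemma sep_forms_indep (c : T -> K) :
  (forall i, vanish k (pts i) (\sum_z c z *: sep_form z)) -> forall z, c z = 0.
Proof.
move=> van [i0 t]; have := van i0.
have -> : \sum_z c z *: sep_form z = \sum_i \sum_t c (i, t) *: sep_form (i, t).
  by rewrite pair_bigA; apply: eq_bigr => -[].
rewrite (bigD1 i0) //=.
set rest := \sum_(i | i != i0) _ => sum_van.
have rest_van : vanish k (pts i0) rest.
  by apply: vanish_sum => i i0i; apply: vanish_sum => t' _; apply/vanishZ/sep_form_vanish.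
pose U := f i0 ^+ k * L i0 ^+ s.
pose Y := \sum_t (c (i0, t)) *: ('X_[mon t] : P).
have block : \sum_t c (i0, t) *: sep_form (i0, t) = U * Y.
  by rewrite mulr_sumr; apply: eq_bigr => t' _; rewrite /sep_form /= mulrA scalerAr.
have Y0 : Y = 0.
  apply: (@vanish_cancel _ _ k (pts i0) U) => //.
  - by rewrite -block -(addrK rest (\sum_t _)); apply: vanishB.
  - by rewrite mevalM !rmorphXn /= f_delta eqxx expr1n mul1r expf_neq0.
  - by apply: dhomog_sum => t'; apply/dhomogZ/dhomog_mon.
have := mcoeff_polv (\row_t c (i0, t)) t; rewrite /polv.
rewrite (eq_bigr (fun t' => c (i0, t') *: 'X_[mon t'])) => [|t' _]; last by rewrite mxE.
by rewrite -/Y Y0 mcoeff0 mxE.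
Qed.

Definition sep_mx : 'M[K]_(#|{: T}|, dimS nv d) :=
  \matrix_(x, j) (sep_form (enum_val x))@_(mon j).

Lemma mul_sep_mx (u : 'rV_#|{: T}|) :
  u *m sep_mx = coefv d (\sum_z u 0 (enum_rank z) *: sep_form z).
Proof.
rewrite mulmx_sum_row linear_sum (reindex _ (onW_bij _ (enum_val_bij T))) /=.
by apply: eq_bigr => x _; rewrite enum_valK linearZ; congr (_ *: _); apply/rowP => j; rewrite !mxE.
Qed.

Variables (g : nat) (M : 'M[K]_(g, dimS nv d)).
Hypothesis M_vanish : forall i i0, vanish k (pts i0) (polv d (row i M)).

Lemma sep_mx_disjoint (u : 'rV_#|{: T}|) : (u *m sep_mx <= M)%MS -> u = 0.
Proof.
case/submxP=> u' uu'.
have comb : \sum_z u 0 (enum_rank z) *: sep_form z = \sum_i u' 0 i *: polv d (row i M).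
  apply: (@coefv_inj _ _ d).
  - by apply: dhomog_sum => z; apply/dhomogZ/sep_form_homog.
  - by apply: dhomog_sum => i; apply/dhomogZ/polv_homog.
  rewrite -mul_sep_mx uu' mulmx_sum_row linear_sum.
  by apply: eq_bigr => i _; rewrite linearZ /= polvK.
have u0 := sep_forms_indep (c := fun z => u 0 (enum_rank z)).
apply/rowP => x; rewrite mxE -(enum_valK x) u0 // => i0.
by rewrite comb; apply: vanish_sum => i _; apply/vanishZ/M_vanish.
Qed.

Lemma rank_vanishing_bound : (\rank M + r * dimS nv k.-1 <= dimS nv d)%N.
Proof.
have free : row_free sep_mx.
  by apply/inj_row_free => v v0; apply: sep_mx_disjoint; rewrite v0 sub0mx.
have cap0 : (M :&: sep_mx)%MS = 0.
  apply/eqP; rewrite -submx0; apply/rV_subP => v vMW.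
  have /submxP[u vu] := submx_trans vMW (capmxSr M sep_mx).
  have uM : (u *m sep_mx <= M)%MS by rewrite -vu (submx_trans vMW) ?capmxSl.
  by rewrite vu (sep_mx_disjoint uM) mul0mx sub0mx.
have rank_sep : \rank sep_mx = (r * dimS nv k.-1)%N.
  by rewrite (eqP free) card_prod !card_ord.
have := mxrank_sum_cap M sep_mx; rewrite cap0 mxrank0 addn0 rank_sep => <-.
exact: rank_leq_col.
Qed.

End VanishingBound.

Section PointIdeals.
Variables (K : fieldType) (nv r : nat) (pts : 'I_r -> 'I_nv -> K).
Local Notation P := {mpoly K[nv]}.
Local Notation J := (ideal_of_points pts).

Lemma ideal_of_points_homog E (p : P) : p \is E.-homog ->
  J p <-> (forall i, p.@[pts i] = 0).
Proof.
move=> pE; split=> [Jp i|p0 i t]; first by have := Jp i E; rewrite pihomog_dE.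
by have [<-|Et] := eqVneq E t; [rewrite pihomog_dE | rewrite (pihomog_ne0 Et pE) meval0].
Qed.

Lemma ideal_of_points_eval (p : P) i : J p -> p.@[pts i] = 0.
Proof.
move=> Jp; rewrite (pihomog_partitionE (mf := mdeg) (k := msize p) (p := p)) //.
by rewrite raddf_sum big1 // => t _; apply: Jp.
Qed.

Lemma ideal_of_points_pow_vanish k (p : P) i : ideal_pow J k p -> vanish k (pts i) p.
Proof.
elim: k p => [|k IH] p; first by move=> _ m.
case=> s [sI ->]; rewrite big_seq; apply: vanish_sum => x /sI[Jx1 Jx2].
rewrite -addn1; apply: vanishM; first exact: IH.
exact/vanish1/ideal_of_points_eval.
Qed.

Definition eval_mx E : 'M[K]_(dimS nv E, r) := \matrix_(t, i) ('X_[mon t] : P).@[pts i].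

Lemma mul_eval_mx E (u : 'rV_(dimS nv E)) i : (u *m eval_mx E) 0 i = (polv E u).@[pts i].
Proof. by rewrite !mxE /polv raddf_sum; apply: eq_bigr => t _ /=; rewrite mxE mevalZ. Qed.

Lemma eval_mx_ker E B : basis_deg J E B -> (kermx (eval_mx E) == coefmx E B)%MS.
Proof.
move=> Bb; have [BJ _ Bspan] := Bb; apply/andP; split; apply/row_subP => i.
  set v := row i (kermx (eval_mx E)).
  have v0 : v *m eval_mx E = 0 by rewrite -row_mul mulmx_ker row0.
  rewrite -(polvK v); apply/(in_spanE (basis_homog Bb) (polv_homog v)).
  apply: Bspan (polv_homog v); apply/(ideal_of_points_homog (polv_homog v)) => j.
  by rewrite -mul_eval_mx v0 mxE.
have [Jb bE] := BJ _ (mem_nth 0 (ltn_ord i)).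
apply/sub_kermxP/rowP => j; rewrite row_coefmx mul_eval_mx coefvK // mxE.
exact: (proj1 (ideal_of_points_homog bE)).
Qed.

Lemma separating_forms E B : basis_deg J E B ->
  (dimS nv E)%:Z - (size B)%:Z = r%:Z ->
  exists f : 'I_r -> P, forall i, f i \is E.-homog /\ forall j, (f i).@[pts j] = (i == j)%:R.
Proof.
move=> Bb codim.
have rank_sum : (size B + \rank (eval_mx E) = dimS nv E)%N.
  rewrite -(eqP (basis_free Bb)) -(eqmx_rank (eval_mx_ker Bb)) mxrank_ker.
  by rewrite subnK // rank_leq_row.
have full : row_full (eval_mx E).
  have dimE : (dimS nv E)%:Z = (size B)%:Z + (\rank (eval_mx E))%:Z.
    by rewrite -PoszD rank_sum.
  by move: codim; rewrite dimE addrAC subrr add0r /row_full => /eqP.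
exists (fun i => polv E (delta_mx 0 i *m pinvmx (eval_mx E))) => i.
split=> [|j]; first exact: polv_homog.
by rewrite -mul_eval_mx mulmxKpV ?submx_full // mxE eqxx eq_sym.
Qed.

End PointIdeals.

Lemma Sip_pow_rank (K : fieldType) nv r h (J : {mpoly K[nv]} -> Prop) E k d g
    (M : 'M[K]_(g, dimS nv d)) :
  Sip h r J -> h (Posz E) = r%:Z -> (0 < k)%N -> (k * E + k.-1 <= d)%N ->
  (forall i, ideal_pow J k (polv d (row i M))) ->
  (\rank M + r * dimS nv k.-1 <= dimS nv d)%N.
Proof.
move=> [[_ hilbJ] [pts [[pts_nz _] J_pts]]] hE k_gt0 d_large MJ; subst J.
have [B [Bb hB]] := hilbJ (Posz E).
have [f f_sep] := separating_forms Bb (etrans (esym hB) hE).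
pose L i : {mpoly K[nv]} := if [pick j | pts i j != 0] is Some j then 'X_j else 0.
have L_ok i : L i \is 1.-homog /\ (L i).@[pts i] != 0.
  rewrite /L; case: pickP => [j pj|none]; last by have [j] := pts_nz i; rewrite none.
  by rewrite dhomogX mevalXU; split=> //; apply/eqP; apply: mdeg1.
apply: (@rank_vanishing_bound K nv r pts k E d f L) => // [i|i j|i|i|i i0].
- by case: (f_sep i).
- by case: (f_sep i).
- by case: (L_ok i).
- by case: (L_ok i).
- exact/ideal_of_points_pow_vanish/MJ.
Qed.

(* A tuple of bases Bs of I_0, ..., I_dd is recorded
   in Defs by the flat list [coords (degs dd) Bs] of all their coefficients.
   Conversely [bases_of_coords v] rebuilds the bases from a flat list v over
   any commutative ring, knowing their sizes from the Hilbert function.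
   Applied to a list of indeterminates, this yields a "generic" family of
   generators of (I^k)_dd whose coefficients are polynomials in the
   coordinates, and which specialises to the family of any actual I. *)
Lemma nth_map_dflt (T U : Type) (x0 : T) (y0 : U) (f : T -> U) s i :
  f x0 = y0 -> nth y0 (map f s) i = f (nth x0 s i).
Proof. by move=> <-; elim: s i => [|x s IH] [|i] //=. Qed.

Section UniversalCoordinates.
Variables (nv : nat) (h : int -> int) (dd k : nat).

Definition degs := iota 0 dd.+1.

Definition ideal_dim a : nat := `|(dimS nv a)%:Z - h (Posz a)|%N.

Definition coord_shape := [seq (ideal_dim a * dimS nv a)%N | a <- degs].
Definition ncoords := sumn coord_shape.

Section Ring.
Variable R : comNzRingType.

Definition form_of_coefs a (c : seq R) : {mpoly R[nv]} :=
  \sum_(t < dimS nv a) c`_t *: 'X_[mon t].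

Definition bases_of_coords (v : seq R) : seq (seq {mpoly R[nv]}) :=
  [seq [seq form_of_coefs a c
         | c <- reshape (nseq (ideal_dim a) (dimS nv a)) (nth [::] (reshape coord_shape v) a)]
     | a <- degs].

Definition pow_gens_of (Bs : seq (seq {mpoly R[nv]})) := pow_gens (nth [::] Bs) k dd.

Definition pow_gens_mx g (Bs : seq (seq {mpoly R[nv]})) : 'M[R]_(g, dimS nv dd) :=
  \matrix_(i < g, j < dimS nv dd) ((pow_gens_of Bs)`_i)@_(mon j).

End Ring.

Lemma pow_gens_mx_map (R S : comNzRingType) (f : {rmorphism R -> S}) g v :
  map_mx f (pow_gens_mx g (bases_of_coords v)) = pow_gens_mx g (bases_of_coords (map f v)).
Proof.
have coefs_map a c : map_mpoly f (form_of_coefs a c) = form_of_coefs a (map f c).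
  rewrite /form_of_coefs raddf_sum; apply: eq_bigr => t _ /=.
  by rewrite map_mpolyZ map_mpolyX (nth_map_dflt _ _ (rmorph0 f)).
have bases_map :
    map (map (map_mpoly f)) (bases_of_coords v) = bases_of_coords (map f v).
  rewrite /bases_of_coords; set sh := coord_shape; set D := degs; clearbody sh D.
  rewrite -map_comp; apply: eq_map => a /=.
  rewrite -map_reshape (nth_map_dflt (x0 := [::]) (f := map f) _ _ (erefl [::])) -map_reshape.
  rewrite -!map_comp.
  by apply: eq_map => c; apply: coefs_map.
apply/matrixP => i j; rewrite !mxE -bases_map /pow_gens_of.
rewrite (eq_pow_gens k dd
  (fun a => nth_map_dflt (x0 := [::]) (f := map (map_mpoly f)) _ a (erefl [::]))).
rewrite -map_pow_gens.
by rewrite (nth_map_dflt _ _ (raddf0 (map_mpoly f))) mcoeff_map_mpoly.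
Qed.

End UniversalCoordinates.

Section CoordsOfBases.
Variables (K : fieldType) (nv : nat) (h : int -> int) (dd : nat).
Local Notation P := {mpoly K[nv]}.
Local Notation coefs a p := [seq (p : P)@_m | m <- mons nv a].

Lemma form_of_coefsK e (p : P) : p \is e.-homog -> form_of_coefs nv e (coefs e p) = p.
Proof.
move=> pe; rewrite -{2}(coefvK pe) /form_of_coefs /polv; apply: eq_bigr => t _.
by rewrite mxE (nth_map 0%MM) // -/(dimS nv e) ltn_ord.
Qed.

Variables (I : P -> Prop) (Bs : seq (seq P)).
Hypothesis Bs_bases : bases_degs I (degs dd) Bs.
Hypothesis Bs_size : forall a, (a <= dd)%N -> size (nth [::] Bs a) = ideal_dim nv h a.

Let coef_lists := [seq flatten [seq coefs x.1 p | p <- x.2] | x <- zip (degs dd) Bs].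

Lemma size_bases : size Bs = dd.+1.
Proof. by case: Bs_bases => -> _; rewrite size_iota. Qed.

Lemma basis_nth a : (a <= dd)%N -> basis_deg I a (nth [::] Bs a).
Proof.
move=> ad; case: Bs_bases => _ /(_ a); rewrite size_iota ltnS nth_iota ?ltnS //.
by rewrite add0n; apply.
Qed.

Lemma nth_coef_lists a : (a <= dd)%N ->
  nth [::] coef_lists a = flatten [seq coefs a p | p <- nth [::] Bs a].
Proof.
move=> ad; rewrite /coef_lists (nth_map (0%N, [::])); last first.
  by rewrite size_zip size_bases size_iota minnn.
by rewrite nth_zip ?size_iota ?size_bases // nth_iota.
Qed.

Lemma shape_coefs a (B : seq P) : shape [seq coefs a p | p <- B] = nseq (size B) (dimS nv a).
Proof. by elim: B => [|p B IH] //=; rewrite IH size_map. Qed.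

Lemma shape_coef_lists : shape coef_lists = coord_shape nv h dd.
Proof.
have size_cl : size coef_lists = dd.+1 by rewrite size_map size_zip size_bases size_iota minnn.
apply: (@eq_from_nth _ 0%N); first by rewrite size_map size_cl size_map size_iota.
move=> a; rewrite size_map size_cl ltnS => ad.
rewrite (nth_map [::]) ?size_cl // nth_coef_lists // size_flatten shape_coefs.
by rewrite sumn_nseq Bs_size // (nth_map 0%N) ?size_iota // nth_iota // mulnC.
Qed.

Lemma bases_of_coordsK : bases_of_coords nv h dd (coords (degs dd) Bs) = Bs.
Proof.
rewrite -[coords _ _]/(flatten coef_lists) /bases_of_coords -shape_coef_lists flattenK.
rewrite -[RHS](mkseq_nth [::] Bs) size_bases /mkseq; apply/eq_in_map => a.
rewrite mem_iota add0n ltnS => ad.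
rewrite nth_coef_lists // -{1}(Bs_size ad) -shape_coefs flattenK -map_comp.
rewrite -[RHS](map_id (nth [::] Bs a)); apply/eq_in_map => p pB /=.
by apply: form_of_coefsK; have [/(_ p pB) []] := basis_nth ad.
Qed.

Lemma size_coords : size (coords (degs dd) Bs) = ncoords nv h dd.
Proof. by rewrite -[coords _ _]/(flatten coef_lists) size_flatten shape_coef_lists. Qed.

End CoordsOfBases.

Lemma meval_indeterminates (K : fieldType) N (c : seq K) : size c = N ->
  map (meval (fun i : 'I_N => nth 0 c i)) [seq ('X_i : {mpoly K[N]}) | i <- enum 'I_N] = c.
Proof.
move=> cN; rewrite -map_comp (eq_map (g := nth 0 c \o val)) => [|i /=]; last first.
  by rewrite mevalXU.
by rewrite map_comp val_enum_ord -cN -/(mkseq _ _) mkseq_nth.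
Qed.

Section Minors.
Variable K : fieldType.

Lemma rank_mxsub m n p (f1 : 'I_p -> 'I_m) (f2 : 'I_p -> 'I_n) (X : 'M[K]_(m, n)) :
  (\rank (mxsub f1 f2 X) <= \rank X)%N.
Proof.
have -> : mxsub f1 f2 X = (mxsub f2 id (mxsub f1 id X)^T)^T.
  by apply/matrixP => i j; rewrite !mxE.
rewrite mxrank_tr rowsubE (leq_trans (mxrankM_maxr _ _)) //.
by rewrite mxrank_tr rowsubE mxrankM_maxr.
Qed.

Lemma minor_rank m n p (f1 : 'I_p -> 'I_m) (f2 : 'I_p -> 'I_n) (X : 'M[K]_(m, n)) :
  \det (mxsub f1 f2 X) != 0 -> (p <= \rank X)%N.
Proof.
rewrite -unitfE -unitmxE -row_free_unit /row_free => /eqP <-.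
exact: rank_mxsub.
Qed.

Lemma max_minor m n (X : 'M[K]_(m, n)) :
  exists (f1 : 'I_(\rank X) -> 'I_m) (f2 : 'I_(\rank X) -> 'I_n),
    \det (mxsub f1 f2 X) != 0.
Proof.
pose f1 := maxrankfun X.
have full : row_full (mxsub f1 id X)^T.
  by rewrite /row_full mxrank_tr; apply: maxrowsub_free.
exists f1, (fullrankfun full).
have -> : mxsub f1 (fullrankfun full) X = (mxsub (fullrankfun full) id (mxsub f1 id X)^T)^T.
  by apply/matrixP => i j; rewrite !mxE.
by rewrite det_tr -unitfE -unitmxE -row_free_unit /row_free mxrank_fullrowsub.
Qed.

End Minors.

Section Closure.
Variables (K : fieldType) (nv : nat) (h : int -> int) (k dd : nat).
Local Notation P := {mpoly K[nv]}.
Local Notation N := (ncoords nv h dd).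

Lemma exists_bases (I : P -> Prop) : (forall a, exists B, basis_deg I a B) ->
  forall D, exists Bs, bases_degs I D Bs.
Proof.
move=> I_bases; elim=> [|a D [Bs [size_Bs Bs_bases]]]; first by exists [::].
have [B Bb] := I_bases a; exists (B :: Bs); split; first by rewrite /= size_Bs.
by case.
Qed.

Lemma hilb_basis_size (I : P -> Prop) a B : hilbfun I h -> basis_deg I a B ->
  size B = ideal_dim nv h a.
Proof.
move=> hilbI Bb; have /= [B' [Bb' hB']] := hilbI (Posz a).
by rewrite /ideal_dim hB' (basis_size Bb Bb') opprB addrC subrK.
Qed.

(* The rows of the generator matrix of I are forms of I^k (rows past the end
   of the family are zero). *)
Lemma pow_gens_mx_in (I : P -> Prop) g Bs : bases_degs I (degs dd) Bs ->
  forall i, ideal_pow I k (polv dd (row i (pow_gens_mx dd k g Bs))).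
Proof.
move=> Bs_bases i.
have row_i : row i (pow_gens_mx dd k g Bs) = coefv dd (pow_gens_of dd k Bs)`_i.
  by apply/rowP => j; rewrite !mxE.
have [ilt|ige] := ltnP i (size (pow_gens_of dd k Bs)); last first.
  rewrite row_i nth_default // linear0 polv0.
  by case: (ideal_pow_ideal I k).
have [gI gd] := pow_gens_homog_in (basis_nth Bs_bases) (leqnn dd) (mem_nth 0 ilt).
by rewrite row_i coefvK.
Qed.

Lemma universal_minor g p (f1 : 'I_p -> 'I_g) (f2 : 'I_p -> 'I_(dimS nv dd)) :
  exists F : {mpoly K[N]}, forall (I : P -> Prop) Bs,
    hilbfun I h -> bases_degs I (degs dd) Bs ->
    F.@[coordv (N := N) (degs dd) Bs] = \det (mxsub f1 f2 (pow_gens_mx dd k g Bs)).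
Proof.
pose X := [seq ('X_i : {mpoly K[N]}) | i <- enum 'I_N].
exists (\det (mxsub f1 f2 (pow_gens_mx dd k g (bases_of_coords nv h dd X)))).
move=> I Bs hilbI Bs_bases.
have Bs_size a : (a <= dd)%N -> size (nth [::] Bs a) = ideal_dim nv h a.
  by move=> ad; apply/(hilb_basis_size hilbI)/(basis_nth Bs_bases).
rewrite -det_map_mx map_mxsub pow_gens_mx_map meval_indeterminates.
  by rewrite (bases_of_coordsK Bs_bases Bs_size).
exact: size_coords Bs_bases Bs_size.
Qed.

Variables (r E : nat) (I0 : P -> Prop).
Hypothesis hE : h (Posz E) = r%:Z.
Hypothesis I0_Slip : Slip h r I0.
Hypothesis k_gt0 : (0 < k)%N.
Hypothesis dd_large : (k * E + k <= dd)%N.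

Lemma Slip_pow_rank : exists Bs0, bases_degs I0 (degs dd) Bs0 /\
  (\rank (coefmx dd (pow_gens_of dd k Bs0)) + r * dimS nv k.-1 <= dimS nv dd)%N.
Proof.
have [[homI0 hilbI0] closed] := I0_Slip.
have [Bs0 Bs0_bases] : exists Bs0, bases_degs I0 (degs dd) Bs0.
  by apply: exists_bases => a; have /= [B [Bb _]] := hilbI0 (Posz a); exists B.
exists Bs0; split=> //; rewrite leqNgt; apply/negP => too_big.
set g := size (pow_gens_of dd k Bs0).
have M0E : coefmx dd (pow_gens_of dd k Bs0) = pow_gens_mx dd k g Bs0.
  by apply/matrixP => i j; rewrite !mxE.
rewrite M0E in too_big; have [f1 [f2 minor0]] := max_minor (pow_gens_mx dd k g Bs0).
have [F F_minor] := universal_minor f1 f2.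
have F_Sip (J : P -> Prop) : Sip h r J -> basic_closed (degs dd) F J.
  move=> SipJ Bs Bs_bases; rewrite (F_minor J Bs SipJ.1.2 Bs_bases).
  have d_large : (k * E + k.-1 <= dd)%N.
    by apply: leq_trans dd_large; rewrite leq_add2l leq_pred.
  have := Sip_pow_rank SipJ hE k_gt0 d_large (pow_gens_mx_in (g := g) Bs_bases).
  apply: contraTeq => /minor_rank rank_le; rewrite -ltnNge.
  by apply: leq_trans too_big _; rewrite leq_add2r.
have := closed (degs dd) N F F_Sip Bs0 Bs0_bases.
by rewrite (F_minor I0 Bs0 hilbI0 Bs0_bases); apply/eqP.
Qed.

Lemma Slip_pow_basis : exists B : seq P,
  basis_deg (ideal_pow I0 k) dd B /\ (size B + r * dimS nv k.-1 <= dimS nv dd)%N.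
Proof.
have [Bs0 [Bs0_bases rank_le]] := Slip_pow_rank.
have homI0 := I0_Slip.1.1.
have span p : ideal_pow I0 k p -> p \is dd.-homog -> in_span (pow_gens_of dd k Bs0) p.
  move=> Ip pd; rewrite -(pihomog_dE pd) /pow_gens_of.
  exact (pow_gens_span homI0 (basis_nth Bs0_bases) (leqnn dd) Ip).
have [B [Bb sizeB]] := basis_of_spanning (ideal_pow_ideal I0 k)
  (fun g => pow_gens_homog_in (basis_nth Bs0_bases) (leqnn dd)) span.
by exists B; rewrite sizeB.
Qed.

End Closure.

Unset Implicit Arguments. Set Strict Implicit.

(* Theorem 1.1.  Only Slip h r I0, h(e) = r and k >= 1 are used; e >= 0
   because h vanishes in negative degrees while r >= 1. *)
Theorem theorem1p1 (K : closedFieldType) (n r : nat) (h : int -> int) (e : int)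
    (I0 : {mpoly K[n.+1]} -> Prop) :
  (1 <= n)%N -> (1 <= r)%N ->
  (exists I : {mpoly K[n.+1]} -> Prop,
      [/\ is_homog_ideal I, saturated I, hilbfun I h
        & exists a0 : int, forall a, a0 <= a -> h a = r%:Z]) ->
  h e = r%:Z -> (forall a : int, h a = r%:Z -> e <= a) ->
  Slip h r I0 ->
  forall (k : nat) (d : int), (1 <= k)%N -> k%:Z * e + k%:Z <= d ->
    exists B : seq {mpoly K[n.+1]},
      basis_deg (ideal_pow I0 k) `|d|%N B /\
      (size B + r * dimS n.+1 k.-1 <= dimS n.+1 `|d|%N)%N.
Proof.
move=> _ r_gt0 _ he _ I0_Slip k d k_gt0 d_large.
case: e he d_large => [E|E] he d_large; last first.
  have := I0_Slip.1.2 (Negz E); rewrite /= he => -[r0].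
  by rewrite r0 in r_gt0.
case: d d_large => [dd|dn]; rewrite -PoszM -PoszD //.
by rewrite lez_nat => dd_large; apply: Slip_pow_basis he I0_Slip k_gt0 dd_large.
Qed.
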